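(* Assume $\beta_\Omega>1$ and fix $\lambda>0$ and $\tau$ with $\frac{1}{\beta_\Omega}<\tau<1$. Then there exists $\varepsilon_0>0$ such that for each $\varepsilon\in(0,\varepsilon_0]$ there is $\delta_1>0$ with the property that for every $0<\delta\le\delta_1$ the function $\psi(x)=\delta(\phi_\Omega(x)+\varepsilon)^\tau$, $x\in\overline{\Omega}$, is a supersolution of (P), i.e. $-\Delta\psi\ge\psi-\psi^p$ in $\Omega$ and $\frac{\partial\psi}{\partial\nu}\ge-\lambda\psi^q$ on $\partial\Omega$.
   Context: $\Omega\subset\mathbb{R}^N$ is a bounded domain with smooth boundary $\partial\Omega$, $\nu$ the unit outer normal, $0<q<1<p$. Problem (P): $-\Delta u=u-u^p$ in $\Omega$, $u\ge0$, $\frac{\partial u}{\partial\nu}=-\lambda u^q$ on $\partial\Omega$. $\beta_\Omega$ is the smallest Dirichlet eigenvalue of $-\Delta$ in $\Omega$ and $\phi_\Omega\in C^{2+\theta}(\overline{\Omega})$ a fixed associated eigenfunction with $\phi_\Omega>0$ in $\Omega$, $\phi_\Omega=0$ on $\partial\Omega$ (so $-\partial\phi_\Omega/\partial\nu$ is bounded between positive constants on $\partial\Omega$). *)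

From HB Require Import structures.
From mathcomp Require Import all_boot all_order all_algebra.
From mathcomp Require Import all_classical all_reals all_analysis.
Import Order.TTheory GRing.Theory Num.Theory.
Import numFieldNormedType.Exports.
Set Implicit Arguments. Unset Strict Implicit. Unset Printing Implicit Defensive.
Local Open Scope classical_set_scope.
Local Open Scope ring_scope.

Section PDEDefs.
Context {R : realType} {N : nat}.
Local Notation V := 'rV[R]_N.

Definition ebasis (i : 'I_N) : V := delta_mx 0 i.
Definition pd (i : 'I_N) (f : V -> R) : V -> R := fun x => 'D_(ebasis i) f x.
Definition laplacian (f : V -> R) (x : V) : R := \sum_(i < N) pd i (pd i f) x.
Definition grad (f : V -> R) (x : V) : V := \row_(i < N) pd i f x.
Definition edot (u v : V) : R := \sum_(i < N) u ord0 i * v ord0 i.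
Definition enorm (v : V) : R := Num.sqrt (edot v v).

Fixpoint iterD (vs : seq V) (f : V -> R) : V -> R :=
  match vs with
  | [::] => f
  | v :: vs' => fun x => 'D_v (iterD vs' f) x
  end.
Definition smooth_fun (f : V -> R) : Prop :=
  forall (vs : seq V) (x : V), differentiable (iterD vs f) x.

Definition C2_fun (f : V -> R) : Prop :=
  (forall x, differentiable f x) /\
  (forall j x, differentiable (pd j f) x) /\
  (forall i j, continuous (pd i (pd j f))).

Definition closure_of (O : set V) : set V := closure O.
Definition bdry (O : set V) : set V := closure O `\` O.

Definition smooth_bounded_domain (O : set V) (rho : V -> R) : Prop :=
  [/\ open O, connected O, O !=set0 & bounded_set O] /\
  [/\ smooth_fun rho, O = [set x | rho x < 0] &
      forall x, bdry O x -> rho x = 0 /\ grad rho x != 0].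

Definition outer_normal (rho : V -> R) (x : V) : V :=
  (enorm (grad rho x))^-1 *: grad rho x.
Definition dnormal (rho : V -> R) (u : V -> R) (x : V) : R :=
  edot (grad u x) (outer_normal rho x).

(* classical Dirichlet eigenfunction of -Delta with eigenvalue b
   (C^2 up to the boundary, represented as the restriction of a C^2 function on R^N) *)
Definition dirichlet_eigenfunction (O : set V) (b : R) (u : V -> R) : Prop :=
  [/\ C2_fun u, exists2 x, O x & u x != 0,
      forall x, O x -> - laplacian u x = b * u x &
      forall x, bdry O x -> u x = 0].
Definition dirichlet_eigenvalue (O : set V) (b : R) : Prop :=
  exists u, dirichlet_eigenfunction O b u.
Definition smallest_dirichlet_eigenvalue (O : set V) (b : R) : Prop :=
  dirichlet_eigenvalue O b /\ forall m, dirichlet_eigenvalue O m -> b <= m.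

Definition supersolution (O : set V) (rho : V -> R) (p q lam : R) (psi : V -> R) : Prop :=
  (forall x, O x -> - laplacian psi x >= psi x - psi x `^ p) /\
  (forall x, bdry O x -> dnormal rho psi x >= - lam * psi x `^ q).

End PDEDefs.

From HB Require Import structures.
From mathcomp Require Import all_boot all_order all_algebra.
From mathcomp Require Import all_classical all_reals all_analysis.
From mathcomp Require Import ring lra.
Import Order.TTheory GRing.Theory Num.Theory.
Import numFieldNormedType.Exports.
Local Open Scope classical_set_scope.
Local Open Scope ring_scope.

(* Writing F = φ + ε and |∇φ|² for the squared gradient, the chain rule gives
     -Δψ = ψ · ( τ(1-τ) |∇φ|² / F²  +  τβ φ / F ),
   so -Δψ ≥ ψ ≥ ψ - ψ^p as soon as one of the two terms is at least 1:
   - far from the boundary (φ ≥ η) the eigenvalue term is ≥ 1 when ε is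
     small compared with (τβ - 1) η, which uses τβ > 1;
   - near the boundary (φ < η) the gradient term is ≥ 1, because |∇φ|² is
     bounded below there (it is ≥ c₁² on ∂Ω, and Ω̅ is compact) and F ≤ 2η.
   On ∂Ω, φ = 0, so ∂ψ/∂ν = δ τ ε^(τ-1) ∂φ/∂ν ≥ -δ τ ε^(τ-1) c₂, which
   dominates -λ ψ^q = -λ δ^q ε^(τq) once δ^(1-q) is small, since q < 1. *)

Lemma powR_subr1 {R : realType} (F t : R) : 0 < F -> F `^ (t - 1) = F `^ t / F.
Proof.
move=> F0; rewrite powRB; last by rewrite (gt_eqF F0) implybT.
by rewrite powRr1 // ltW.
Qed.

Lemma powR_subr2 {R : realType} (F t : R) :
  0 < F -> F `^ (t - 2) = F `^ t / F ^+ 2.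
Proof.
move=> F0; rewrite powRB; last by rewrite (gt_eqF F0) implybT.
by rewrite (powR_mulrn 2) // ltW.
Qed.

Section Calculus.
Context {R : realType} {N : nat}.
Local Notation V := 'rV[R]_N.

Lemma differentiable_derive_powR (f : V -> R) (a : R) (x v : V) :
  differentiable f x -> 0 < f x ->
  differentiable (fun y => f y `^ a) x /\
  'D_v (fun y => f y `^ a) x = a * f x `^ (a - 1) * 'D_v f x.
Proof.
move=> df fx0.
have dpow : differentiable (fun t : R => t `^ a) (f x).
  apply/derivable1_diffP; apply: (@derivable_powR R 1 a (f x)).
  by rewrite in_itv /= fx0.
have dcomp : differentiable ((fun t : R => t `^ a) \o f) x
  by exact: differentiable_comp.
split; first exact: dcomp.
rewrite (_ : (fun y => f y `^ a) = (fun t : R => t `^ a) \o f) //.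
rewrite deriveE // diff_comp // /= deriveE //.
rewrite (diff1E dpow) powR_derive1 ?in_itv /= ?fx0 //.
by rewrite [X in X = _]mulrC.
Qed.

Lemma pd_scaled_powR (F : V -> R) (d t : R) (x : V) (i : 'I_N) :
  differentiable F x -> 0 < F x ->
  pd i (fun y => d * F y `^ t) x = d * (t * F x `^ (t - 1) * pd i F x).
Proof.
move=> dF Fx0.
have [dpow Dpow] := differentiable_derive_powR F t x (ebasis i) dF Fx0.
by rewrite /pd (deriveMl d (diff_derivable (v := ebasis i) dpow)) Dpow.
Qed.

Lemma pd2_scaled_powR (F : V -> R) (d t : R) (x : V) (i : 'I_N) :
  (forall y, differentiable F y) -> differentiable (pd i F) x -> 0 < F x ->
  pd i (pd i (fun y => d * F y `^ t)) x =
  d * t * ((t - 1) * F x `^ (t - 2) * pd i F x * pd i F x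
           + F x `^ (t - 1) * pd i (pd i F) x).
Proof.
move=> dF dpF Fx0.
have first_near : \forall y \near x, pd i (fun y => d * F y `^ t) y =
    d * ((t * F y `^ (t - 1)) * pd i F y).
  have /cvgr_gt Fpos := differentiable_continuous (dF x).
  by near=> y; apply: pd_scaled_powR => //; near: y; exact: Fpos.
have [dpow1 Dpow1] :=
  differentiable_derive_powR F (t - 1) x (ebasis i) (dF x) Fx0.
have der_pow : derivable (fun y => t * F y `^ (t - 1)) x (ebasis i).
  exact: derivableM (derivable_cst _ _ _) (diff_derivable (v := ebasis i) dpow1).
have der_pd : derivable (pd i F) x (ebasis i) := diff_derivable (v := ebasis i) dpF.
rewrite /pd (near_eq_derive _ first_near).
rewrite (deriveMl d (derivableM der_pow der_pd)) (deriveM der_pow der_pd).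
rewrite (deriveMl t (diff_derivable (v := ebasis i) dpow1)) Dpow1.
rewrite -/(pd i F x) -/(pd i (pd i F) x) /pd.
have -> : t - 1 - 1 = t - 2 by rewrite -addrA -opprD.
rewrite /GRing.scale /=; ring.
Unshelve. all: by end_near.
Qed.

Lemma pd_addr (f : V -> R) (e : R) (i : 'I_N) :
  (forall y, differentiable f y) -> pd i (fun y => f y + e) = pd i f.
Proof.
move=> df; apply/funext => y; rewrite /pd.
have := deriveD (diff_derivable (v := ebasis i) (df y))
  (derivable_cst e y (ebasis i)).
by rewrite derive_cst addr0 => <-.
Qed.

Definition grad_sq (u : V -> R) (x : V) : R := \sum_(i < N) pd i u x ^+ 2.

Definition shifted_power (phi : V -> R) (eps delta tau : R) (y : V) : R :=
  delta * (phi y + eps) `^ tau.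

Section PowerOfShift.
Variables (phi : V -> R) (eps delta tau : R).
Hypothesis phi_diff : forall y, differentiable phi y.
Local Notation psi := (shifted_power phi eps delta tau).

Let shift_diff (y : V) : differentiable (fun z => phi z + eps) y.
Proof. exact: differentiableD (phi_diff y) (differentiable_cst eps y). Qed.

Lemma laplacian_scaled_powR (x : V) :
  (forall j y, differentiable (pd j phi) y) -> 0 < phi x + eps ->
  laplacian psi x =
  delta * tau * ((tau - 1) * (phi x + eps) `^ (tau - 2) * grad_sq phi x
                 + (phi x + eps) `^ (tau - 1) * laplacian phi x).
Proof.
move=> dpd Fx0; rewrite /laplacian /shifted_power.
have dpF i : differentiable (pd i (fun y => phi y + eps)) x
  by rewrite pd_addr.
under eq_bigr => i _ do
  rewrite (pd2_scaled_powR _ _ _ _ _ shift_diff (dpF i) Fx0) !pd_addr //.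
rewrite -mulr_sumr big_split /= -!mulr_sumr /grad_sq.
congr (_ * (_ + _)); rewrite mulr_sumr.
by apply: eq_bigr => i _; rewrite -mulrA expr2.
Qed.

Lemma dnormal_scaled_powR (rho : V -> R) (x : V) : 0 < phi x + eps ->
  dnormal rho psi x =
  delta * tau * (phi x + eps) `^ (tau - 1) * dnormal rho phi x.
Proof.
move=> Fx0; rewrite /dnormal /edot mulr_sumr; apply: eq_bigr => i _.
by rewrite !mxE pd_scaled_powR // pd_addr //; ring.
Qed.

Lemma neg_laplacian_scaled_powR (beta : R) (x : V) :
  (forall j y, differentiable (pd j phi) y) -> 0 < phi x + eps ->
  - laplacian phi x = beta * phi x ->
  - laplacian psi x =
  psi x * (tau * (1 - tau) * grad_sq phi x / (phi x + eps) ^+ 2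
           + tau * beta * phi x / (phi x + eps)).
Proof.
move=> dpd Fx0 eigen.
rewrite laplacian_scaled_powR // powR_subr1 // powR_subr2 //.
rewrite -[laplacian phi x]opprK eigen /shifted_power.
by field; rewrite gt_eqF.
Qed.

End PowerOfShift.

End Calculus.

Section NormalDerivative.
Context {R : realType} {N : nat}.
Local Notation V := 'rV[R]_N.

Lemma unit_cauchy_schwarz (a n : 'I_N -> R) :
  \sum_i n i * n i = 1 -> (\sum_i a i * n i) ^+ 2 <= \sum_i a i ^+ 2.
Proof.
move=> n_unit; set d := \sum_i a i * n i.
have residual : \sum_i (a i - d * n i) ^+ 2 = \sum_i a i ^+ 2 - d ^+ 2.
  have expand i : (a i - d * n i) ^+ 2 =
     a i ^+ 2 - (2 * d) * (a i * n i) + d ^+ 2 * (n i * n i) by ring.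
  under eq_bigr => i _ do rewrite expand.
  rewrite !big_split /= sumrN -!mulr_sumr n_unit -/d; ring.
have : 0 <= \sum_i (a i - d * n i) ^+ 2
  by apply: sumr_ge0 => i _; exact: sqr_ge0.
by rewrite residual subr_ge0.
Qed.

Lemma edot_normalized (g : V) : g != 0 ->
  edot ((enorm g)^-1 *: g) ((enorm g)^-1 *: g) = 1.
Proof.
move=> g0; rewrite /edot /enorm.
have sq_ge0 (y : R) : 0 <= y * y by rewrite -expr2 sqr_ge0.
have gg_gt0 : 0 < edot g g.
  rewrite lt_neqAle; apply/andP; split; last first.
    by apply: sumr_ge0 => i _; exact: sq_ge0.
  apply/eqP => /esym gg0; move/eqP: g0; apply; apply/rowP => i.
  have /(_ i isT) := psumr_eq0P (fun j _ => sq_ge0 (g ord0 j)) gg0.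
  rewrite mxE => /eqP; rewrite mulf_eq0 orbb => /eqP.
  by rewrite (ord1 ord0).
have scale_sq (k : R) i :
  k * g ord0 i * (k * g ord0 i) = k ^+ 2 * (g ord0 i * g ord0 i) by ring.
under eq_bigr => i _ do rewrite !mxE scale_sq.
by rewrite -mulr_sumr -/(edot g g) exprVn sqr_sqrtr ?ltW // mulVf // gt_eqF.
Qed.

Lemma dnormal_sq_le (rho u : V -> R) (x : V) : grad rho x != 0 ->
  dnormal rho u x ^+ 2 <= grad_sq u x.
Proof.
move=> g0; have := edot_normalized _ g0.
rewrite /dnormal /edot /outer_normal => n_unit.
under eq_bigr => i _ do rewrite [grad u x _ _]mxE.
exact: (unit_cauchy_schwarz (fun i => pd i u x) _ n_unit).
Qed.

Lemma grad_sq_ge_dnormal (rho u : V -> R) (x : V) (c : R) :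
  grad rho x != 0 -> 0 <= c -> c <= - dnormal rho u x -> c ^+ 2 <= grad_sq u x.
Proof.
move=> g0 c0 cD; apply: le_trans (dnormal_sq_le _ _ _ g0).
by rewrite -[X in _ <= X]sqrrN lerXn2r ?nnegrE //; lra.
Qed.

End NormalDerivative.

Section NearBoundary.
Context {R : realType} {N : nat}.
Local Notation V := 'rV[R]_N.

Lemma bounded_closure (O : set V) : bounded_set O -> bounded_set (closure O).
Proof.
rewrite /= /bounded_near; apply: filterS => M O_le_M x Ox.
have ball_closed : closed ((fun y : V => `|y|) @^-1` [set r : R | r <= M]).
  apply: preimage_closed; last exact: closed_le.
  by move=> y _; exact: norm_continuous.
have O_sub : O `<=` [set y : V | `|y| <= M] by move=> y Oy; exact: O_le_M.
by move: (closureS O_sub Ox); rewrite -(proj1 (closure_id _) ball_closed).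
Qed.

Lemma grad_sq_continuous (phi : V -> R) :
  (forall j y, differentiable (pd j phi) y) -> continuous (grad_sq phi).
Proof.
move=> dpd y; apply: differentiable_continuous.
rewrite /grad_sq -(fct_sumE _ _ (fun i y => pd i phi y ^+ 2)).
by apply: differentiable_sum => i /=; exact: differentiableM.
Qed.

(* A compactness argument: if φ > 0 on the bounded set O and G ≥ c > 0 on
   ∂O, then G > c/2 on the part of O where φ is small.  Otherwise the
   compact set {y ∈ cl O | G y ≤ c/2} would contain interior points with
   arbitrarily small φ, while φ attains a positive minimum on it. *)
Lemma lower_bound_near_boundary (O : set V) (phi G : V -> R) (c : R) :
  bounded_set O -> continuous phi -> continuous G -> 0 < c ->
  (forall x, O x -> 0 < phi x) -> (forall x, bdry O x -> c <= G x) ->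
  exists2 eta, 0 < eta & forall x, O x -> phi x < eta -> c / 2 < G x.
Proof.
move=> bO cphi cG c0 phi_pos G_bdry.
pose K := closure O `&` G @^-1` [set r : R | r <= c / 2].
have K_compact : compact K.
  apply: compact_closedI.
    apply: bounded_closed_compact; last exact: closed_closure.
    exact: bounded_closure.
  by apply: preimage_closed; [move=> y _; exact: cG | exact: closed_le].
have [K0 | /eqP/set0P [y0 Ky0]] := pselect (K = set0).
  exists 1 => // x Ox _; rewrite ltNge; apply/negP => Gx.
  have : K x by split => //; exact: subset_closure.
  by rewrite K0.
have [z zK z_min] := EVT_min_rV (f := phi) (ex_intro _ y0 Ky0) K_compact
  (continuous_subspaceT (fun x => cphi x)).
move: zK; rewrite inE => -[clz Gz].
have Oz : O z.
  apply: contrapT => nOz.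
  have := G_bdry z (conj clz nOz); rewrite /= in Gz; lra.
exists (phi z); first exact: phi_pos.
move=> x Ox phix; rewrite ltNge; apply/negP => Gx.
have : phi z <= phi x
  by apply: z_min; rewrite inE; split => //; exact: subset_closure.
by rewrite leNgt phix.
Qed.

End NearBoundary.

Lemma eigen_term_ge1 {R : realType} (t b ph e : R) :
  0 < ph -> 0 < e -> e <= (t * b - 1) * ph -> 1 <= t * b * ph / (ph + e).
Proof.
move=> ph0 e0 small_e.
by rewrite ler_pdivlMr ?mul1r; lra.
Qed.

Lemma gradient_term_ge1 {R : realType} (k G F : R) :
  0 < F -> F ^+ 2 <= k * G -> 1 <= k * G / F ^+ 2.
Proof. by move=> F0 small_F; rewrite ler_pdivlMr ?exprn_gt0 ?mul1r. Qed.

(* The smallness threshold for δ in the boundary condition: the normal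
   derivative δτε^(τ-1)∂φ/∂ν ≥ -δτε^(τ-1)c₂ beats -λδ^q ε^(τq) as long as
   δ^(1-q) ≤ λ ε^(τq) / (τ ε^(τ-1) c₂). *)
Definition boundary_threshold {R : realType} (lam q tau c2 eps : R) : R :=
  (lam * (eps `^ tau) `^ q / (tau * eps `^ (tau - 1) * c2)) `^ (1 - q)^-1.

Lemma boundary_threshold_gt0 {R : realType} (lam q tau c2 eps : R) :
  0 < lam -> 0 < tau -> 0 < c2 -> 0 < eps ->
  0 < boundary_threshold lam q tau c2 eps.
Proof.
by move=> *; rewrite /boundary_threshold powR_gt0 // divr_gt0 ?mulr_gt0 ?powR_gt0.
Qed.

(* The boundary inequality as a statement about reals:  for D ≥ -c₂ and
   0 < δ ≤ threshold,  -λ (δ ε^τ)^q ≤ δ τ ε^(τ-1) D.  It rests on δ = δ^q δ^(1-q)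
   and δ^(1-q) ≤ λ ε^(τq) / (τ ε^(τ-1) c₂). *)
Lemma boundary_power_ineq {R : realType} (lam q tau c2 eps delta D : R) :
  0 < q -> q < 1 -> 0 < lam -> 0 < tau -> 0 < c2 -> 0 < eps -> 0 < delta ->
  delta <= boundary_threshold lam q tau c2 eps -> - c2 <= D ->
  - lam * (delta * eps `^ tau) `^ q <= delta * tau * eps `^ (tau - 1) * D.
Proof.
move=> q0 q1 lam0 tau0 c20 eps0 delta0 delta_small D_ge.
set k := tau * eps `^ (tau - 1); set E := (eps `^ tau) `^ q.
have k0 : 0 < k by apply: mulr_gt0 => //; exact: powR_gt0.
have dq0 : 0 <= delta `^ q by exact: powR_ge0.
have split_delta : delta = delta `^ q * delta `^ (1 - q).
  have one : q + (1 - q) = 1 by rewrite addrC subrK.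
  by rewrite -powRD ?one ?powRr1 ?implybT ?gt_eqF // ltW.
set K := lam * E / (k * c2).
have K0 : 0 < K by rewrite /K divr_gt0 ?mulr_gt0 // !powR_gt0.
have delta_pow : delta `^ (1 - q) <= K.
  have q10 : 0 <= 1 - q by lra.
  have dn : delta \is Num.nneg by rewrite nnegrE ltW.
  have tn : boundary_threshold lam q tau c2 eps \is Num.nneg
    by rewrite nnegrE powR_ge0.
  have := ge0_ler_powR q10 dn tn delta_small.
  rewrite /boundary_threshold -/k -/E -/K -powRrM mulVf ?powRr1 ?(ltW K0) //.
  by rewrite subr_eq0 gt_eqF.
have delta_k : delta `^ (1 - q) * (k * c2) <= lam * E
  by rewrite -ler_pdivlMr; [exact: delta_pow | exact: mulr_gt0].
have Dk : delta * k * (- c2) <= delta * k * D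
  by apply: ler_wpM2l D_ge; exact: ltW (mulr_gt0 delta0 k0).
have -> : delta * tau * eps `^ (tau - 1) * D = delta * k * D by rewrite /k; ring.
rewrite powRM ?powR_ge0 ?(ltW delta0) // -/E.
apply: le_trans Dk.
have -> : delta * k * - c2 = - (delta `^ q * (delta `^ (1 - q) * (k * c2))).
  by rewrite {1}split_delta; ring.
rewrite mulNr lerN2 [lam * _]mulrCA.
by apply: ler_wpM2l.
Qed.

Section Supersolution.
Context {R : realType} {N : nat}.
Local Notation V := 'rV[R]_N.
Variables (Omega : set V) (phi : V -> R) (beta tau : R).
Hypothesis phi_diff : forall y, differentiable phi y.
Hypothesis pd_phi_diff : forall j y, differentiable (pd j phi) y.
Hypotheses (tau_gt0 : 0 < tau) (tau_lt1 : tau < 1).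

(* Let η ≤ 1 be such that |∇φ|² ≥ cc wherever φ < η
   in Ω, with 4η ≤ τ(1-τ)cc.  Then for ε ≤ η and ε ≤ (τβ - 1)η every
   δ (φ + ε)^τ satisfies -Δψ ≥ ψ - ψ^p in Ω: where φ ≥ η the eigenvalue term
   of -Δψ/ψ is ≥ 1, and where φ < η we have (φ + ε)² ≤ 4η² ≤ 4η, so the
   gradient term is ≥ 1. *)
Lemma interior_supersolution (p eta cc eps delta : R) :
  (forall x, Omega x -> 0 < phi x) ->
  (forall x, Omega x -> - laplacian phi x = beta * phi x) ->
  eta <= 1 -> 4 * eta <= tau * (1 - tau) * cc ->
  (forall x, Omega x -> phi x < eta -> cc <= grad_sq phi x) ->
  0 < eps -> eps <= eta -> eps <= (tau * beta - 1) * eta -> 0 < delta ->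
  forall x, Omega x ->
  shifted_power phi eps delta tau x - shifted_power phi eps delta tau x `^ p
  <= - laplacian (shifted_power phi eps delta tau) x.
Proof.
move=> phi_pos eigen eta_le1 eta_small grad_lb eps0 eps_eta eps_beta delta0.
move=> x Ox; have phi0 := phi_pos x Ox.
have F0 : 0 < phi x + eps by lra.
have tb1 : 0 < tau * beta - 1.
  have eta0 : 0 < eta by lra.
  by rewrite -(pmulr_lgt0 _ eta0); exact: lt_le_trans eps0 eps_beta.
have k0 : 0 < tau * (1 - tau) by rewrite mulr_gt0 // subr_gt0.
rewrite (neg_laplacian_scaled_powR _ _ _ _ phi_diff beta x pd_phi_diff F0
  (eigen x Ox)).
set psi := shifted_power phi eps delta tau.
have psi0 : 0 < psi x by rewrite mulr_gt0 ?powR_gt0.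
set grad_term := tau * (1 - tau) * grad_sq phi x / (phi x + eps) ^+ 2.
set eigen_term := tau * beta * phi x / (phi x + eps).
have grad_term0 : 0 <= grad_term.
  apply: divr_ge0; last exact: sqr_ge0.
  apply: mulr_ge0; first exact: ltW.
  by apply: sumr_ge0 => i _; exact: sqr_ge0.
have eigen_term0 : 0 <= eigen_term.
  have tb0 : 0 <= tau * beta by lra.
  by apply: divr_ge0; [exact: mulr_ge0 tb0 (ltW phi0) | exact: ltW].
suff factor_ge1 : 1 <= grad_term + eigen_term.
  have psi_le : psi x <= psi x * (grad_term + eigen_term)
    by rewrite ler_peMr // ltW.
  have psi_p := powR_ge0 (psi x) p; lra.
have [far | near_bdry] := lerP eta (phi x).
  have eigen_ge1 : 1 <= eigen_term.
    by apply: eigen_term_ge1 => //; apply: le_trans eps_beta _; rewrite ler_pM2l.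
  lra.
have grad_ge1 : 1 <= grad_term.
  apply: gradient_term_ge1 => //.
  have grad_cc : tau * (1 - tau) * cc <= tau * (1 - tau) * grad_sq phi x.
    by rewrite ler_pM2l // grad_lb.
  rewrite expr2; nra.
lra.
Qed.

Lemma boundary_supersolution (rho : V -> R) (q lam c2 eps delta : R) (x : V) :
  0 < q -> q < 1 -> 0 < lam -> 0 < c2 -> 0 < eps -> 0 < delta ->
  delta <= boundary_threshold lam q tau c2 eps ->
  phi x = 0 -> - c2 <= dnormal rho phi x ->
  - lam * shifted_power phi eps delta tau x `^ q
  <= dnormal rho (shifted_power phi eps delta tau) x.
Proof.
move=> q0 q1 lam0 c20 eps0 delta0 delta_small phi_x0 D_ge.
have F0 : 0 < phi x + eps by rewrite phi_x0 add0r.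
rewrite (dnormal_scaled_powR _ _ _ _ phi_diff rho x F0).
rewrite /shifted_power phi_x0 add0r.
exact: (boundary_power_ineq _ _ _ _ _ _ _ q0 q1 lam0 tau_gt0 c20 eps0 delta0
  delta_small D_ge).
Qed.

End Supersolution.

Lemma small_scale {R : realType} (a b : R) : 0 < a -> 0 < b ->
  exists2 eta, 0 < eta & [/\ eta <= a, eta <= 1 & 4 * eta <= b].
Proof.
move=> a0 b0; exists (Num.min a (Num.min 1 (b / 4))).
  by rewrite !lt_min a0 ltr01 divr_gt0.
split; first by rewrite ge_min lexx.
  by rewrite !ge_min lexx orbT.
by rewrite mulrC -ler_pdivlMr // !ge_min lexx !orbT.
Qed.

Theorem theorem5p1 (R : realType) (N : nat) (Omega : set 'rV[R]_N)
  (rho : 'rV[R]_N -> R) (p q lam tau beta : R) (phi : 'rV[R]_N -> R) :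
  smooth_bounded_domain Omega rho ->
  0 < q -> q < 1 -> 1 < p ->
  smallest_dirichlet_eigenvalue Omega beta ->
  dirichlet_eigenfunction Omega beta phi ->
  (forall x, Omega x -> 0 < phi x) ->
  (exists c1 c2 : R, [/\ 0 < c1, 0 < c2 &
     forall x, bdry Omega x -> c1 <= - dnormal rho phi x <= c2]) ->
  1 < beta ->
  0 < lam ->
  beta^-1 < tau -> tau < 1 ->
  exists2 eps0 : R, 0 < eps0 &
    forall eps : R, 0 < eps -> eps <= eps0 ->
    exists2 delta1 : R, 0 < delta1 &
      forall delta : R, 0 < delta -> delta <= delta1 ->
        supersolution Omega rho p q lam
          (fun x => delta * (phi x + eps) `^ tau).
Proof.
move=> [[_ _ _ Omega_bounded] [_ _ bdry_regular]] q0 q1 _ _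
  [[phi_diff [pd_diff _]] _ eigen phi_bdry] phi_pos [c1 [c2 [c10 c20 dn_bounds]]]
  beta1 lam0 tau_beta tau1.
have tau0 : 0 < tau by apply: lt_trans tau_beta; rewrite invr_gt0; lra.
have tau_beta1 : 0 < tau * beta - 1.
  by rewrite subr_gt0 -(ltr_pdivrMr _ _ (lt_trans ltr01 beta1)) div1r.
have grad_bdry x : bdry Omega x -> c1 ^+ 2 <= grad_sq phi x.
  move=> bx; have /andP [c1_le _] := dn_bounds x bx.
  exact: grad_sq_ge_dnormal _ _ _ _ (proj2 (bdry_regular x bx)) (ltW c10) c1_le.
have [eta1 eta1_gt0 grad_near] := lower_bound_near_boundary _ _ _ _ Omega_bounded
  (fun y => differentiable_continuous (phi_diff y)) (grad_sq_continuous _ pd_diff)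
  (exprn_gt0 2 c10) phi_pos grad_bdry.
have gap0 : 0 < tau * (1 - tau) * (c1 ^+ 2 / 2).
  by rewrite !mulr_gt0 ?divr_gt0 ?exprn_gt0 // subr_gt0.
have [eta eta0 [eta_le_eta1 eta_le1 eta_small]] := small_scale _ _ eta1_gt0 gap0.
exists (Num.min eta ((tau * beta - 1) * eta)).
  by rewrite lt_min eta0 mulr_gt0.
move=> eps eps0; rewrite le_min => /andP [eps_eta eps_beta].
exists (boundary_threshold lam q tau c2 eps); first exact: boundary_threshold_gt0.
move=> delta delta0 delta_small; split.
- apply: (interior_supersolution _ _ _ _ phi_diff pd_diff tau0 tau1 p eta
    (c1 ^+ 2 / 2) eps delta phi_pos eigen eta_le1 eta_small) => // x Ox phix.
  by apply/ltW/grad_near => //; exact: lt_le_trans eta_le_eta1.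
- move=> x bx; have /andP [_ le_c2] := dn_bounds x bx.
  apply: (boundary_supersolution _ _ phi_diff tau0 rho q lam c2 eps delta x
    q0 q1 lam0 c20 eps0 delta0 delta_small (phi_bdry x bx)); lra.
Qed.
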